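(* Let $\mathcal{M}=(S,A,\mathcal{U},R,s_\iota,\gamma)$ be an $(s,a)$-rectangular RMDP, $s\in S$ and $a\in A$. If there exists $\vec x\in\mathbb{R}^S$ such that \[R(s,a)+\gamma\inf_{\vec u\in\mathcal{U}_{(s,a)}}\sum_{s'\in S}P_{\vec u}(s,a)(s')\vec x(s')<\mathfrak{B}(\vec x)(s)-\frac{\gamma}{1-\gamma}\,\mathsf{span}(\mathfrak{B}(\vec x)-\vec x),\] then action $a$ is suboptimal for state $s$.
   Context: An RMDP $(S,A,\mathcal{U},R,s_\iota,\gamma)$ has finite states $S$, finite actions $A$, rewards $R\colon S\times A\to\mathbb{R}$, initial state $s_\iota$, discount $\gamma\in(0,1)$, and $(s,a)$-rectangular uncertainty set $\mathcal{U}=\prod_{(s,a)}\mathcal{U}_{(s,a)}$, where each $\vec u\in\mathcal{U}_{(s,a)}$ is a probability vector over successor states giving $P_{\vec u}(s,a)(s')=\vec u(s')$. The robust Bellman operator is $\mathfrak{B}(\vec x)(s)=\max_{a\in A}R(s,a)+\gamma\inf_{\vec u\in\mathcal{U}_{(s,a)}}\sum_{s'}P_{\vec u}(s,a)(s')\vec x(s')$ for $\vec x\in\mathbb{R}^S$; $\mathsf{span}(\vec y)=\max_s\vec y(s)-\min_s\vec y(s)$. Let $\vec v$ be the optimal robust value function $\vec v(s)=\sup_\pi\inf_{\vec u\in\mathcal{U}}\mathbb{E}_{\pi,P_{\vec u}}[\sum_t\gamma^tR(s_t,a_t)\mid s_0=s]$, which is the fixed point of $\mathfrak{B}$. Action $a$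 is suboptimal for state $s$ if $R(s,a)+\gamma\inf_{\vec u\in\mathcal{U}_{(s,a)}}\sum_{s'}P_{\vec u}(s,a)(s')\vec v(s')<\vec v(s)$. *)

From HB Require Import structures.
From mathcomp Require Import all_boot all_order all_algebra.
From mathcomp Require Import boolp classical_sets reals.
Set Implicit Arguments. Unset Strict Implicit. Unset Printing Implicit Defensive.
Import Order.TTheory GRing.Theory Num.Theory.
Local Open Scope classical_set_scope.
Local Open Scope ring_scope.

Section RMDP.
Variables (R : realType) (S A : finType).

Definition prob_vec (u : S -> R) : Prop :=
  (forall s', 0 <= u s') /\ \sum_(s' : S) u s' = 1.

(* An (s,a)-rectangular uncertainty set: U s a = U_(s,a), a nonempty set of
   probability vectors; the full set U is the product of the U s a. *)
Definition rect_uncertainty (U : S -> A -> set (S -> R)) : Prop :=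
  forall s a, U s a !=set0 /\ (forall u, U s a u -> prob_vec u).

Definition worst_exp (U : S -> A -> set (S -> R)) (s : S) (a : A)
    (x : S -> R) : R :=
  inf [set \sum_(s' : S) u s' * x s' | u in U s a].

Definition qval (Rw : S -> A -> R) (U : S -> A -> set (S -> R)) (gamma : R)
    (x : S -> R) (s : S) (a : A) : R :=
  Rw s a + gamma * worst_exp U s a x.

(* robust Bellman operator; max over the finite set A, written as sup *)
Definition bellman (Rw : S -> A -> R) (U : S -> A -> set (S -> R)) (gamma : R)
    (x : S -> R) (s : S) : R :=
  sup [set qval Rw U gamma x s a | a in [set: A]].

Definition rspan (y : S -> R) : R := sup (range y) - inf (range y).

(* a is suboptimal for s w.r.t. the optimal robust value v *)
Definition suboptimal (Rw : S -> A -> R) (U : S -> A -> set (S -> R))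
    (gamma : R) (v : S -> R) (s : S) (a : A) : Prop :=
  qval Rw U gamma v s a < v s.

End RMDP.

(** The robust Bellman operator [B] is monotone and satisfies [B (y + c) = B y + gamma c]
    for constants [c]. For such an operator any [y <= B y] lies below its fixed point
    [v], and any [y >= B y] lies above it. With [d := B x - x] this places [v] between
    [x + min d / (1 - gamma)] and [x + max d / (1 - gamma)]. Hence
    [Q v (s,a) <= Q x (s,a) + gamma max d / (1 - gamma)], which by hypothesis is below
    [B x s + gamma min d / (1 - gamma) = B (x + min d / (1 - gamma)) s <= B v s = v s]. *)

From HB Require Import structures.
From mathcomp Require Import all_boot all_order all_algebra.
From mathcomp Require Import boolp classical_sets reals.
From mathcomp Require Import ring lra.
Import Order.TTheory GRing.Theory Num.Theory.
Local Open Scope classical_set_scope.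
Local Open Scope ring_scope.

Set Implicit Arguments.
Unset Strict Implicit.

Section FiniteRange.
Context {R : realType} {T : finType} (f : T -> R).

Lemma sup_fin_range_attained (t0 : T) :
  exists2 t, sup (range f) = f t & forall t', f t' <= f t.
Proof.
have [tm _ tm_max] := @arg_maxP _ R T t0 xpredT f isT.
have ub_tm : ubound (range f) (f tm) by move=> _ [t _ <-]; exact: tm_max.
exists tm; last by move=> t; exact: tm_max.
apply/le_anti/andP; split; first by apply: ge_sup => //; exists (f tm), tm.
by apply: ub_le_sup; [exists (f tm) | exists tm].
Qed.

Lemma le_sup_fin_range (t : T) : f t <= sup (range f).
Proof. by have [tm -> tm_max] := sup_fin_range_attained t; exact: tm_max. Qed.

Lemma inf_fin_range_le (t : T) : inf (range f) <= f t.
Proof.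
have [tm _ tm_min] := @arg_minP _ R T t xpredT f isT.
apply: ge_inf; last by exists t.
by exists (f tm) => _ [t' _ <-]; exact: tm_min.
Qed.

End FiniteRange.

Section MonotoneShiftOperator.
Context {R : realType} {T : finType} {B : (T -> R) -> T -> R} {gamma : R}.
Hypothesis B_mono :
  forall y z, (forall t, y t <= z t) -> forall t, B y t <= B z t.
Hypothesis B_shift : forall y c t, B (fun t => y t + c) t = B y t + gamma * c.
Hypothesis gamma_lt1 : gamma < 1.

(** At the point [tm] where the excess [del] of [y] over [z] is largest, [del <= gamma * del]. *)
Lemma le_of_gap_le_Bgap (y z : T -> R) :
  (forall t, y t - z t <= B y t - B z t) -> forall t, y t <= z t.
Proof.
move=> gap_le t.
have [tm _ tm_max] := @arg_maxP _ R T t xpredT (fun t => y t - z t) isT.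
set del := y tm - z tm in tm_max.
have y_le : forall t, y t <= z t + del by move=> t'; have /= := tm_max t' isT; lra.
have By_le := B_mono y_le tm; rewrite B_shift in By_le.
have del_le0 : del <= 0.
  have : del * (1 - gamma) <= 0 by have := gap_le tm; rewrite -/del; lra.
  by rewrite pmulr_lle0 // subr_gt0.
by have /= := tm_max t isT; lra.
Qed.

End MonotoneShiftOperator.

Section RobustBellman.
Context {R : realType} {S A : finType} {U : S -> A -> set (S -> R)}.
Hypothesis hU : rect_uncertainty U.

Lemma expectation_ge (u y : S -> R) (r : R) :
  prob_vec u -> (forall t, r <= y t) -> r <= \sum_t u t * y t.
Proof.
move=> [u_ge0 u_sum1] r_le.
rewrite -[r]mul1r -u_sum1 mulr_suml.
by apply: ler_sum => t _; apply: ler_wpM2l.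
Qed.

Lemma expectation_shift (u y : S -> R) (c : R) :
  prob_vec u -> \sum_t u t * (y t + c) = \sum_t u t * y t + c.
Proof.
move=> [_ u_sum1].
rewrite -[in RHS](mul1r c) -u_sum1 mulr_suml -big_split /=.
by apply: eq_bigr => t _; rewrite mulrDr.
Qed.

Lemma worst_exp_le s a y u :
  U s a u -> worst_exp U s a y <= \sum_t u t * y t.
Proof.
move=> Uu; apply: ge_inf; last by exists u.
exists (inf (range y)) => _ [u' Uu' <-].
apply: expectation_ge; first exact: (proj2 (hU s a)).
exact: inf_fin_range_le.
Qed.

Lemma le_worst_exp s a y r :
  (forall u, U s a u -> r <= \sum_t u t * y t) -> r <= worst_exp U s a y.
Proof.
move=> r_le; apply: lb_le_inf; last by move=> _ [u Uu <-]; exact: r_le.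
by have [[u Uu] _] := hU s a; exists (\sum_t u t * y t), u.
Qed.

Lemma worst_exp_mono s a y z :
  (forall t, y t <= z t) -> worst_exp U s a y <= worst_exp U s a z.
Proof.
move=> y_le; apply: le_worst_exp => u Uu.
apply: (le_trans (worst_exp_le y Uu)).
have [u_ge0 _] := proj2 (hU s a) u Uu.
by apply: ler_sum => t _; apply: ler_wpM2l.
Qed.

Lemma worst_exp_shift s a y c :
  worst_exp U s a (fun t => y t + c) = worst_exp U s a y + c.
Proof.
apply/le_anti/andP; split.
  rewrite -lerBlDr; apply: le_worst_exp => u Uu.
  rewrite lerBlDr -expectation_shift; first exact: worst_exp_le.
  exact: (proj2 (hU s a)).
apply: le_worst_exp => u Uu.
rewrite expectation_shift; last exact: (proj2 (hU s a)).
by rewrite lerD2r; apply: worst_exp_le.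
Qed.

Variables (Rw : S -> A -> R) (gamma : R).
Hypothesis gamma_ge0 : 0 <= gamma.

Lemma qval_mono y z t b :
  (forall t, y t <= z t) -> qval Rw U gamma y t b <= qval Rw U gamma z t b.
Proof. by move=> y_le; rewrite lerD2l ler_wpM2l // worst_exp_mono. Qed.

Lemma qval_shift y c t b :
  qval Rw U gamma (fun t => y t + c) t b = qval Rw U gamma y t b + gamma * c.
Proof. by rewrite /qval worst_exp_shift mulrDr addrA. Qed.

Variable a0 : A.

Lemma qval_le_bellman y t b : qval Rw U gamma y t b <= bellman Rw U gamma y t.
Proof. exact: le_sup_fin_range. Qed.

Lemma bellman_attained y t :
  exists b, bellman Rw U gamma y t = qval Rw U gamma y t b.
Proof.
have [b eq_b _] := sup_fin_range_attained (qval Rw U gamma y t) a0.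
by exists b.
Qed.

Lemma bellman_mono y z :
  (forall t, y t <= z t) -> forall t, bellman Rw U gamma y t <= bellman Rw U gamma z t.
Proof.
move=> y_le t; have [b ->] := bellman_attained y t.
exact: le_trans (qval_mono t b y_le) (qval_le_bellman z t b).
Qed.

Lemma bellman_shift y c t :
  bellman Rw U gamma (fun t => y t + c) t = bellman Rw U gamma y t + gamma * c.
Proof.
apply/le_anti/andP; split.
  have [b ->] := bellman_attained (fun t => y t + c) t.
  by rewrite qval_shift lerD2r qval_le_bellman.
have [b ->] := bellman_attained y t.
by rewrite -qval_shift qval_le_bellman.
Qed.

End RobustBellman.

Unset Implicit Arguments.

Theorem theorem27 (R : realType) (S A : finType)
    (U : S -> A -> set (S -> R)) (Rw : S -> A -> R) (s_iota : S) (gamma : R)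
    (hU : rect_uncertainty U) (hg0 : 0 < gamma) (hg1 : gamma < 1)
    (v : S -> R) (hv : forall t, bellman Rw U gamma v t = v t)
    (s : S) (a : A) :
  (exists x : S -> R,
     qval Rw U gamma x s a <
       bellman Rw U gamma x s
       - gamma / (1 - gamma) * rspan (fun t => bellman Rw U gamma x t - x t)) ->
  suboptimal Rw U gamma v s a.
Proof.
move=> [x Hx]; rewrite /suboptimal.
have gamma_ge0 := ltW hg0.
have B_mono := bellman_mono hU Rw gamma_ge0 a.
have B_shift := bellman_shift hU Rw gamma a.
set d := fun t => bellman Rw U gamma x t - x t.
set m := inf (range d); set M := sup (range d).
have m_le t : m <= d t by exact: inf_fin_range_le.
have le_M t : d t <= M by exact: le_sup_fin_range.
set c := m / (1 - gamma); set C := M / (1 - gamma).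
have c_fix : c = m + gamma * c by rewrite /c; field; lra.
have C_fix : C = M + gamma * C by rewrite /C; field; lra.
have lower : forall t, x t + c <= v t.
  apply: (le_of_gap_le_Bgap B_mono B_shift hg1 (y := fun t => x t + c)) => t.
  by rewrite B_shift hv; have := m_le t; rewrite /d; lra.
have upper : forall t, v t <= x t + C.
  apply: (le_of_gap_le_Bgap B_mono B_shift hg1 (z := fun t => x t + C)) => t.
  by rewrite B_shift hv; have := le_M t; rewrite /d; lra.
have Qv_le := qval_mono hU Rw gamma_ge0 s a upper; rewrite (qval_shift hU) in Qv_le.
have Bx_le := B_mono _ _ lower s; rewrite B_shift hv in Bx_le.
have gap : gamma * C - gamma / (1 - gamma) * (M - m) = gamma * c.
  by rewrite /C /c; field; lra.
have span_d : rspan d = M - m by [].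
rewrite -/d span_d in Hx.
lra.
Qed.
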